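(* Let $\sigma>0$, $k>0$, $\alpha\geq 0$, $\lambda\in\mathbb{R}$, and consider the linear parabolic partial differential equation for $u=u(t,x)$, $x>0$, $$u_t=\tfrac12\sigma^2x^2u_{xx}+kx(\alpha-x)u_x+\lambda x^2u .$$ Suppose $\alpha\neq0$ or $\lambda\neq\frac{k^2}{2\sigma^2}$. Then the Lie algebra of infinitesimal (point) symmetries of this equation is spanned by the two vector fields $V_1=\partial_t$ and $V_6=u\partial_u$, together with the infinite-dimensional subalgebra of vector fields $V_\varphi=\varphi(t,x)\partial_u$, where $\varphi(t,x)$ is an arbitrary solution of the equation.
   Context: An infinitesimal symmetry is a vector field $V=\tau(t,x,u)\partial_t+\xi(t,x,u)\partial_x+\phi(t,x,u)\partial_u$ generating a one-parameter group of transformations of $(t,x,u)$ that maps solutions of the equation to solutions; equivalently, the second prolongation of $V$ applied to $\tfrac12\sigma^2x^2u_{xx}+kx(\alpha-x)u_x+\lambda x^2u-u_t$ vanishes on solutions of the equation. *)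

From Stdlib Require Import Reals List.
From Coquelicot Require Import Coquelicot.
Open Scope R_scope.

(* Coordinates of the base space (t, x, u). Functions are R -> R -> R -> R,
   only their values on the domain  t : R, x > 0, u : R  matter. *)
Inductive var := VT | VX | VU.

Definition pd (i : var) (f : R -> R -> R -> R) : R -> R -> R -> R :=
  match i with
  | VT => fun t x u => Derive (fun s => f s x u) t
  | VX => fun t x u => Derive (fun s => f t s u) x
  | VU => fun t x u => Derive (fun s => f t x s) u
  end.

Definition has_pd (i : var) (f : R -> R -> R -> R) (t x u : R) : Prop :=
  match i with
  | VT => ex_derive (fun s => f s x u) t
  | VX => ex_derive (fun s => f t s u) x
  | VU => ex_derive (fun s => f t x s) u
  end.

Definition iter_pd (l : list var) (f : R -> R -> R -> R) : R -> R -> R -> R :=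
  fold_right pd f l.

Definition cont3 (f : R -> R -> R -> R) (t x u : R) : Prop :=
  forall eps : R, 0 < eps -> exists delta : R, 0 < delta /\
    forall t' x' u', Rabs (t' - t) < delta -> Rabs (x' - x) < delta ->
      Rabs (u' - u) < delta -> Rabs (f t' x' u' - f t x u) < eps.

Definition smooth (f : R -> R -> R -> R) : Prop :=
  forall (l : list var) (t x u : R), 0 < x ->
    cont3 (iter_pd l f) t x u /\
    (forall i, has_pd i (iter_pd l f) t x u).

Section Eq.
Variables (sigma k alpha lambda : R).

Definition Delta (x u ut ux uxx : R) : R :=
  / 2 * sigma ^ 2 * x ^ 2 * uxx + k * x * (alpha - x) * ux
  + lambda * x ^ 2 * u - ut.

(* Second prolongation of V = tau d_t + xi d_x + phi d_u applied to Delta,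
   at the jet point (t,x,u,u_t,u_x,u_xx,u_xt,u_tt).  The prolongation
   coefficients phi^t, phi^x, phi^xx are the standard ones
   (Olver, Applications of Lie Groups to Differential Equations, (2.39)-(2.41)),
   i.e. D_J(phi - xi u_x - tau u_t) + xi u_{J,x} + tau u_{J,t}, expanded. *)
Definition prol_Delta (tau xi phi : R -> R -> R -> R)
    (t x u ut ux uxx uxt utt : R) : R :=
  let d1 i f := pd i f t x u in
  let d2 i j f := pd i (pd j f) t x u in
  let phit :=
    d1 VT phi - d1 VT xi * ux + (d1 VU phi - d1 VT tau) * ut
    - d1 VU xi * ux * ut - d1 VU tau * ut ^ 2 in
  let phix :=
    d1 VX phi + (d1 VU phi - d1 VX xi) * ux - d1 VX tau * ut
    - d1 VU xi * ux ^ 2 - d1 VU tau * ux * ut in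
  let phixx :=
    d2 VX VX phi + (2 * d2 VX VU phi - d2 VX VX xi) * ux - d2 VX VX tau * ut
    + (d2 VU VU phi - 2 * d2 VX VU xi) * ux ^ 2 - 2 * d2 VX VU tau * ux * ut
    - d2 VU VU xi * ux ^ 3 - d2 VU VU tau * ux ^ 2 * ut
    + (d1 VU phi - 2 * d1 VX xi) * uxx - 2 * d1 VX tau * uxt
    - 3 * d1 VU xi * ux * uxx - d1 VU tau * ut * uxx
    - 2 * d1 VU tau * ux * uxt in
  (* pr V (Delta) = tau Delta_t + xi Delta_x + phi Delta_u
                   + phi^t Delta_{u_t} + phi^x Delta_{u_x} + phi^xx Delta_{u_xx} *)
  tau t x u * 0
  + xi t x u * (sigma ^ 2 * x * uxx + k * (alpha - 2 * x) * ux
                + 2 * lambda * x * u)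
  + phi t x u * (lambda * x ^ 2)
  + phit * (-1)
  + phix * (k * x * (alpha - x))
  + phixx * (/ 2 * sigma ^ 2 * x ^ 2).

Definition is_symmetry (tau xi phi : R -> R -> R -> R) : Prop :=
  forall t x u ut ux uxx uxt utt, 0 < x ->
    Delta x u ut ux uxx = 0 ->
    prol_Delta tau xi phi t x u ut ux uxx uxt utt = 0.

Definition is_solution (psi : R -> R -> R) : Prop :=
  forall t x, 0 < x ->
    Derive (fun s => psi s x) t =
      / 2 * sigma ^ 2 * x ^ 2 * Derive (fun y => Derive (fun s => psi t s) y) x
      + k * x * (alpha - x) * Derive (fun s => psi t s) x
      + lambda * x ^ 2 * psi t x.
End Eq.

(* Once u_t is eliminated through the equation, the infinitesimal criterion is a
   polynomial in u_x, u_xx, u_xt, and its coefficients give tau_x = tau_u = 0,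
   xi_u = 0, phi_uu = 0 and three further determining equations.  Integrating
   them, tau = T(t), xi = x (T'(t)/2 ln x + B(t)) and phi = F(t,x) u + phi(t,x,0),
   where F_x, hence F up to a function of t, is explicit in T and B.  The
   coefficient of u in the last determining equation is then a linear relation
   among 1, ln x, ln^2 x, x, x ln x, x^2, x^2 ln x; their independence yields
   alpha T' = alpha B = 0 and (lambda - k^2/(2 sigma^2)) T' =
   (lambda - k^2/(2 sigma^2)) B = 0.  So T' = B = 0 under the hypothesis, whence
   tau is constant, xi = 0, F is constant, and phi(t,x,0) solves the equation. *)

From Pilot Require Import Defs.
From Stdlib Require Import Reals Lra.
From Coquelicot Require Import Coquelicot.
Open Scope R_scope.

Lemma Rmult_eq0_reg_l (a b : R) : a <> 0 -> a * b = 0 -> b = 0.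
Proof. intros Ha Hab. destruct (Rmult_integral a b Hab); [contradiction | assumption]. Qed.

Lemma locally_pos (x : R) : 0 < x -> locally x (fun s => 0 < s).
Proof.
  intros Hx. exists (mkposreal x Hx). intros y Hy.
  apply Rabs_lt_between in Hy. simpl in Hy. unfold minus, plus, opp in Hy. simpl in Hy. lra.
Qed.

Lemma pd_ext (f g : R -> R -> R -> R) :
  (forall t x u, 0 < x -> f t x u = g t x u) ->
  forall i t x u, 0 < x -> pd i f t x u = pd i g t x u.
Proof.
  intros Hfg i t x u Hx. destruct i; simpl.
  - apply Derive_ext. intros s. exact (Hfg s x u Hx).
  - apply Derive_ext_loc. apply (filter_imp _ _ (fun s Hs => Hfg t s u Hs)).
    exact (locally_pos x Hx).
  - apply Derive_ext. intros s. exact (Hfg t x s Hx).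
Qed.

Lemma pd_const (f : R -> R -> R -> R) (c : R) :
  (forall t x u, 0 < x -> f t x u = c) ->
  forall i t x u, 0 < x -> pd i f t x u = 0.
Proof.
  intros Hf i t x u Hx. rewrite (pd_ext f (fun _ _ _ => c) Hf i t x u Hx).
  destruct i; simpl; apply Derive_const.
Qed.

Lemma Derive_plus_const (f : R -> R) (c x : R) :
  Derive (fun s => c + f s) x = Derive f x.
Proof. unfold Derive. f_equal. apply Lim_ext. intros h. f_equal. ring. Qed.

Lemma Derive_affine (p e : R -> R) (c t : R) :
  ex_derive p t -> ex_derive e t ->
  Derive (fun s => p s * c + e s) t = Derive p t * c + Derive e t.
Proof.
  intros Hp He. apply is_derive_unique. auto_derive; auto.
  rewrite !Rmult_1_l. reflexivity.
Qed.

Lemma is_derive0_eq (f : R -> R) (a b : R) :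
  (forall x, Rmin a b <= x <= Rmax a b -> is_derive f x 0) -> f b = f a.
Proof.
  intros Hf.
  destruct (MVT_gen f a b (fun _ => 0)) as [c [_ Hc]].
  - intros x Hx. apply Hf. lra.
  - intros x Hx. apply continuity_pt_filterlim. apply (ex_derive_continuous f).
    exists 0. exact (Hf x Hx).
  - lra.
Qed.

Lemma is_derive0_const_pos (f : R -> R) :
  (forall x, 0 < x -> is_derive f x 0) -> forall x, 0 < x -> f x = f 1.
Proof.
  intros Hf x Hx. apply is_derive0_eq. intros y Hy. apply Hf.
  unfold Rmin, Rmax in Hy. destruct (Rle_dec 1 x); lra.
Qed.

Lemma is_derive0_const (f : R -> R) :
  (forall x, is_derive f x 0) -> forall x, f x = f 0.
Proof. intros Hf x. apply is_derive0_eq. intros y _. apply Hf. Qed.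

Section SmoothDerivatives.
Variable f : R -> R -> R -> R.
Hypothesis f_smooth : smooth f.

Lemma smooth_is_derive_t l t x u : 0 < x ->
  is_derive (fun s => iter_pd l f s x u) t (pd VT (iter_pd l f) t x u).
Proof. intros Hx. apply Derive_correct. exact (proj2 (f_smooth l t x u Hx) VT). Qed.

Lemma smooth_is_derive_x l t x u : 0 < x ->
  is_derive (fun s => iter_pd l f t s u) x (pd VX (iter_pd l f) t x u).
Proof. intros Hx. apply Derive_correct. exact (proj2 (f_smooth l t x u Hx) VX). Qed.

Lemma smooth_is_derive_u l t x u : 0 < x ->
  is_derive (fun s => iter_pd l f t x s) u (pd VU (iter_pd l f) t x u).
Proof. intros Hx. apply Derive_correct. exact (proj2 (f_smooth l t x u Hx) VU). Qed.

End SmoothDerivatives.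

Definition exp_quasi_poly (c0 c1 c2 c3 c4 c5 c6 y : R) : R :=
  c0 + c1 * y + c2 * y ^ 2 + exp y * (c3 + c4 * y) + exp (2 * y) * (c5 + c6 * y).

Lemma exp_quasi_poly_eq0_derive (c0 c1 c2 c3 c4 c5 c6 : R) :
  (forall y, exp_quasi_poly c0 c1 c2 c3 c4 c5 c6 y = 0) ->
  forall y, exp_quasi_poly c1 (2 * c2) 0 (c3 + c4) c4 (2 * c5 + c6) (2 * c6) y = 0.
Proof.
  intros H y.
  assert (Hd : is_derive (exp_quasi_poly c0 c1 c2 c3 c4 c5 c6) y
                 (exp_quasi_poly c1 (2 * c2) 0 (c3 + c4) c4 (2 * c5 + c6) (2 * c6) y)).
  { unfold exp_quasi_poly. auto_derive; auto. ring. }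
  rewrite <- (is_derive_unique _ _ _ Hd), (Derive_ext _ (fun _ => 0) _ H).
  apply Derive_const.
Qed.

(* With x = e^y the left-hand side becomes an exp_quasi_poly; three derivatives
   kill its polynomial part, and the values at 0 of the next four form a
   triangular system in c3, c4, c5, c6. *)
Lemma ln_monomials_indep (c0 c1 c2 c3 c4 c5 c6 : R) :
  (forall x, 0 < x -> c0 + c1 * ln x + c2 * ln x ^ 2 + c3 * x + c4 * (x * ln x)
     + c5 * x ^ 2 + c6 * (x ^ 2 * ln x) = 0) ->
  c3 = 0 /\ c4 = 0 /\ c5 = 0 /\ c6 = 0.
Proof.
  intros H.
  assert (H0 : forall y, exp_quasi_poly c0 c1 c2 c3 c4 c5 c6 y = 0).
  { intros y. unfold exp_quasi_poly. rewrite <- (H (exp y) (exp_pos y)), ln_exp.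
    replace (2 * y) with (y + y) by ring. rewrite exp_plus. ring. }
  pose proof (exp_quasi_poly_eq0_derive _ _ _ _ _ _ _ H0) as H1.
  pose proof (exp_quasi_poly_eq0_derive _ _ _ _ _ _ _ H1) as H2.
  pose proof (exp_quasi_poly_eq0_derive _ _ _ _ _ _ _ H2) as H3.
  pose proof (exp_quasi_poly_eq0_derive _ _ _ _ _ _ _ H3) as H4.
  pose proof (exp_quasi_poly_eq0_derive _ _ _ _ _ _ _ H4) as H5.
  pose proof (exp_quasi_poly_eq0_derive _ _ _ _ _ _ _ H5) as H6.
  specialize (H3 0). specialize (H4 0). specialize (H5 0). specialize (H6 0).
  unfold exp_quasi_poly in *. rewrite Rmult_0_r, exp_0 in *. lra.
Qed.

Lemma prol_Delta_uxt_slope (sigma k alpha lambda : R) (tau xi phi : R -> R -> R -> R)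
    (t x u ut ux uxx utt : R) :
  prol_Delta sigma k alpha lambda tau xi phi t x u ut ux uxx 1 utt
  - prol_Delta sigma k alpha lambda tau xi phi t x u ut ux uxx 0 utt =
  - sigma ^ 2 * x ^ 2 * (pd VX tau t x u + pd VU tau t x u * ux).
Proof. unfold prol_Delta. cbv zeta. field. Qed.

Section Forward.
Variables sigma k alpha lambda : R.
Hypotheses (sigma_pos : 0 < sigma) (k_pos : 0 < k).
Variables tau xi phi : R -> R -> R -> R.
Hypotheses (tau_smooth : smooth tau) (xi_smooth : smooth xi) (phi_smooth : smooth phi).
Hypothesis sym : is_symmetry sigma k alpha lambda tau xi phi.

Let prol t x u ut ux uxx uxt :=
  prol_Delta sigma k alpha lambda tau xi phi t x u ut ux uxx uxt 0.

Let ut_sol x u ux uxx :=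
  / 2 * sigma ^ 2 * x ^ 2 * uxx + k * x * (alpha - x) * ux + lambda * x ^ 2 * u.

Lemma prol_on_solutions t x u ux uxx uxt : 0 < x ->
  prol t x u (ut_sol x u ux uxx) ux uxx uxt = 0.
Proof. intros Hx. apply sym; [exact Hx |]. unfold ut_sol, Defs.Delta. ring. Qed.

Lemma diffusion_neq0 x : 0 < x -> sigma ^ 2 * x ^ 2 <> 0.
Proof. intros Hx. apply Rgt_not_eq, Rmult_lt_0_compat; apply pow_lt; lra. Qed.

Lemma tau_x_u_eq0 t x u : 0 < x -> pd VX tau t x u = 0 /\ pd VU tau t x u = 0.
Proof.
  intros Hx.
  assert (slope : forall ux, sigma ^ 2 * x ^ 2 * (pd VX tau t x u + pd VU tau t x u * ux) = 0).
  { intros ux.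
    pose proof (prol_Delta_uxt_slope sigma k alpha lambda tau xi phi t x u
                  (ut_sol x u ux 0) ux 0 0) as D.
    fold (prol t x u (ut_sol x u ux 0) ux 0 1) (prol t x u (ut_sol x u ux 0) ux 0 0) in D.
    rewrite !prol_on_solutions in D by exact Hx. lra. }
  pose proof (slope 0) as S0. pose proof (slope 1) as S1.
  apply Rmult_integral in S0, S1.
  pose proof (diffusion_neq0 x Hx). destruct S0, S1; split; lra.
Qed.

Lemma pd_tau_x_u_eq0 i t x u : 0 < x ->
  pd i (pd VX tau) t x u = 0 /\ pd i (pd VU tau) t x u = 0.
Proof. intros Hx. split; apply (pd_const _ 0); auto; intros; apply tau_x_u_eq0; auto. Qed.

Lemma xi_u_eq0 t x u : 0 < x -> pd VU xi t x u = 0.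
Proof.
  intros Hx.
  destruct (tau_x_u_eq0 t x u Hx) as [Tx Tu].
  destruct (pd_tau_x_u_eq0 VX t x u Hx) as [Txx Txu].
  destruct (pd_tau_x_u_eq0 VU t x u Hx) as [_ Tuu].
  set (Q ux uxx := prol t x u (ut_sol x u ux uxx) ux uxx 0).
  assert (D : Q 1 1 - Q 1 0 - Q 0 1 + Q 0 0 = - sigma ^ 2 * x ^ 2 * pd VU xi t x u).
  { unfold Q, prol, ut_sol, prol_Delta. cbv zeta.
    rewrite Tx, Tu, Txx, Txu, Tuu. field. }
  unfold Q in D. rewrite !prol_on_solutions in D by exact Hx.
  pose proof (diffusion_neq0 x Hx).
  apply (Rmult_eq_reg_l (sigma ^ 2 * x ^ 2)); lra.
Qed.

Lemma pd_xi_u_eq0 i t x u : 0 < x -> pd i (pd VU xi) t x u = 0.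
Proof. intros Hx. apply (pd_const _ 0); auto. intros; apply xi_u_eq0; auto. Qed.

(* The coefficients of u_x^2, u_xx, u_x and 1 in the criterion, once u_t is
   eliminated through the equation. *)
Lemma determining_equations t x u : 0 < x ->
  pd VU (pd VU phi) t x u = 0 /\
  sigma ^ 2 * x * xi t x u + / 2 * sigma ^ 2 * x ^ 2 * pd VT tau t x u
    - sigma ^ 2 * x ^ 2 * pd VX xi t x u = 0 /\
  k * (alpha - 2 * x) * xi t x u + pd VT xi t x u
    + k * x * (alpha - x) * (pd VT tau t x u - pd VX xi t x u)
    + / 2 * sigma ^ 2 * x ^ 2 * (2 * pd VX (pd VU phi) t x u - pd VX (pd VX xi) t x u) = 0 /\
  2 * lambda * x * u * xi t x u + lambda * x ^ 2 * phi t x u - pd VT phi t x u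
    - lambda * x ^ 2 * u * (pd VU phi t x u - pd VT tau t x u)
    + k * x * (alpha - x) * pd VX phi t x u
    + / 2 * sigma ^ 2 * x ^ 2 * pd VX (pd VX phi) t x u = 0.
Proof.
  intros Hx.
  destruct (tau_x_u_eq0 t x u Hx) as [Tx Tu].
  destruct (pd_tau_x_u_eq0 VX t x u Hx) as [Txx Txu].
  destruct (pd_tau_x_u_eq0 VU t x u Hx) as [_ Tuu].
  pose proof (xi_u_eq0 t x u Hx) as Xu.
  pose proof (pd_xi_u_eq0 VX t x u Hx) as Xxu.
  pose proof (pd_xi_u_eq0 VU t x u Hx) as Xuu.
  pose proof (prol_on_solutions t x u 0 0 0 Hx) as Q00.
  pose proof (prol_on_solutions t x u 1 0 0 Hx) as Q10.
  pose proof (prol_on_solutions t x u (-1) 0 0 Hx) as Qm0.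
  pose proof (prol_on_solutions t x u 0 1 0 Hx) as Q01.
  unfold prol, ut_sol, prol_Delta in Q00, Q10, Qm0, Q01. cbv zeta in Q00, Q10, Qm0, Q01.
  rewrite Tx, Tu, Txx, Txu, Tuu, Xu, Xxu, Xuu in Q00, Q10, Qm0, Q01.
  pose proof (diffusion_neq0 x Hx).
  split; [| split; [| split]]; try lra.
  apply (Rmult_eq_reg_l (sigma ^ 2 * x ^ 2)); lra.
Qed.

Definition T t := tau t 1 0.
Definition T1 := Derive T.
Definition T2 := Derive T1.
Definition B t := xi t 1 0.
Definition B1 := Derive B.

Lemma ex_derive_T t : ex_derive T t.
Proof. exact (proj2 (tau_smooth nil t 1 0 Rlt_0_1) VT). Qed.
Lemma ex_derive_T1 t : ex_derive T1 t.
Proof. exact (proj2 (tau_smooth (VT :: nil)%list t 1 0 Rlt_0_1) VT). Qed.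
Lemma ex_derive_T2 t : ex_derive T2 t.
Proof. exact (proj2 (tau_smooth (VT :: VT :: nil)%list t 1 0 Rlt_0_1) VT). Qed.
Lemma ex_derive_B t : ex_derive B t.
Proof. exact (proj2 (xi_smooth nil t 1 0 Rlt_0_1) VT). Qed.
Lemma ex_derive_B1 t : ex_derive B1 t.
Proof. exact (proj2 (xi_smooth (VT :: nil)%list t 1 0 Rlt_0_1) VT). Qed.

Lemma tau_eq t x u : 0 < x -> tau t x u = T t.
Proof.
  intros Hx. unfold T.
  rewrite (is_derive0_const_pos (fun s => tau t s u)); [| | exact Hx].
  - apply (is_derive0_const (fun s => tau t 1 s)). intros s.
    rewrite <- (proj2 (tau_x_u_eq0 t 1 s Rlt_0_1)).
    exact (smooth_is_derive_u tau tau_smooth nil t 1 s Rlt_0_1).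
  - intros s Hs. rewrite <- (proj1 (tau_x_u_eq0 t s u Hs)).
    exact (smooth_is_derive_x tau tau_smooth nil t s u Hs).
Qed.

Lemma tau_t_eq t x u : 0 < x -> pd VT tau t x u = T1 t.
Proof. intros Hx. exact (pd_ext tau (fun t _ _ => T t) tau_eq VT t x u Hx). Qed.

Lemma xi_x_of_xi t x u : 0 < x -> pd VX xi t x u = xi t x u / x + T1 t / 2.
Proof.
  intros Hx. destruct (determining_equations t x u Hx) as [_ [E _]].
  rewrite tau_t_eq in E by exact Hx.
  apply (Rmult_eq_reg_l (sigma ^ 2 * x ^ 2)); [| exact (diffusion_neq0 x Hx)].
  apply Rminus_diag_uniq_sym. rewrite <- E. field. lra.
Qed.

Lemma xi_eq t x u : 0 < x -> xi t x u = x * (T1 t / 2 * ln x + B t).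
Proof.
  intros Hx.
  assert (Hu : xi t x u = xi t x 0).
  { apply (is_derive0_const (fun s => xi t x s)). intros s.
    rewrite <- (xi_u_eq0 t x s Hx). exact (smooth_is_derive_u xi xi_smooth nil t x s Hx). }
  assert (Hc : forall s, 0 < s -> is_derive (fun s => xi t s 0 / s - T1 t / 2 * ln s) s 0).
  { intros s Hs. auto_derive.
    - repeat split; try lra. exact (proj2 (xi_smooth nil t s 0 Hs) VX).
    - change (Derive (fun s => xi t s 0) s) with (pd VX xi t s 0).
      rewrite xi_x_of_xi by exact Hs. field. lra. }
  pose proof (is_derive0_const_pos _ Hc x Hx) as C. simpl in C.
  rewrite ln_1, Rdiv_1_r in C. unfold B. rewrite Hu.
  replace (T1 t / 2 * ln x + xi t 1 0) with (xi t x 0 / x) by lra. field. lra.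
Qed.

Lemma xi_t_eq t x u : 0 < x -> pd VT xi t x u = x * (T2 t / 2 * ln x + B1 t).
Proof.
  intros Hx. rewrite (pd_ext xi _ xi_eq VT t x u Hx). simpl.
  apply is_derive_unique. auto_derive.
  - split; [apply ex_derive_T1 | split; [apply ex_derive_B | exact I]].
  - change (fun s => T1 s) with T1. change (fun s => B s) with B.
    unfold T2, B1. field.
Qed.

Lemma xi_x_eq t x u : 0 < x -> pd VX xi t x u = T1 t / 2 * ln x + B t + T1 t / 2.
Proof. intros Hx. rewrite xi_x_of_xi, xi_eq by exact Hx. field. lra. Qed.

Lemma xi_xx_eq t x u : 0 < x -> pd VX (pd VX xi) t x u = T1 t / (2 * x).
Proof.
  intros Hx. rewrite (pd_ext (pd VX xi) _ xi_x_eq VX t x u Hx). simpl.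
  apply is_derive_unique. auto_derive; [lra | field; lra].
Qed.

Definition F t x := pd VU phi t x 0.
Definition Fx t x := pd VX (pd VU phi) t x 0.

Lemma phi_u_eq t x u : 0 < x -> pd VU phi t x u = F t x.
Proof.
  intros Hx. apply (is_derive0_const (fun s => pd VU phi t x s)). intros s.
  rewrite <- (proj1 (determining_equations t x s Hx)).
  exact (smooth_is_derive_u phi phi_smooth (VU :: nil) t x s Hx).
Qed.

Lemma phi_affine t x u : 0 < x -> phi t x u = F t x * u + phi t x 0.
Proof.
  intros Hx.
  assert (H : forall s, is_derive (fun s => phi t x s - F t x * s) s 0).
  { intros s. auto_derive.
    - exact (proj2 (phi_smooth nil t x s Hx) VU).
    - change (Derive (fun s => phi t x s) s) with (pd VU phi t x s).
      rewrite phi_u_eq by exact Hx. ring. }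
  pose proof (is_derive0_const _ H u) as C. simpl in C. lra.
Qed.

Lemma phi0_solution : is_solution sigma k alpha lambda (fun t x => phi t x 0).
Proof.
  intros t x Hx. destruct (determining_equations t x 0 Hx) as [_ [_ [_ E]]].
  change (pd VT phi t x 0 = / 2 * sigma ^ 2 * x ^ 2 * pd VX (pd VX phi) t x 0
    + k * x * (alpha - x) * pd VX phi t x 0 + lambda * x ^ 2 * phi t x 0).
  lra.
Qed.

Lemma phi_xu_eq t x u : 0 < x -> pd VX (pd VU phi) t x u = Fx t x.
Proof.
  intros Hx. unfold Fx.
  rewrite (pd_ext (pd VU phi) _ phi_u_eq VX t x u Hx),
          (pd_ext (pd VU phi) _ phi_u_eq VX t x 0 Hx).
  reflexivity.
Qed.

Definition cP t := (- B1 t - k * alpha * T1 t / 2 + sigma ^ 2 * T1 t / 4) / sigma ^ 2.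
Definition cQ t := - T2 t / (2 * sigma ^ 2).
Definition cR t := (k * B t + k * T1 t / 2) / sigma ^ 2.
Definition cS t := k * T1 t / (2 * sigma ^ 2).
Definition cE t := F t 1 - cR t + cS t.

Lemma Fx_eq t x : 0 < x -> Fx t x = (cP t + cQ t * ln x) / x + cR t + cS t * ln x.
Proof.
  intros Hx.
  destruct (determining_equations t x 0 Hx) as [_ [_ [E _]]].
  rewrite xi_eq, xi_t_eq, tau_t_eq, xi_x_eq, xi_xx_eq, phi_xu_eq in E by exact Hx.
  apply (Rmult_eq_reg_l (sigma ^ 2 * x ^ 2)); [| exact (diffusion_neq0 x Hx)].
  apply Rminus_diag_uniq. rewrite <- E.
  unfold cP, cQ, cR, cS. field. lra.
Qed.

Lemma F_eq t x : 0 < x ->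
  F t x = cP t * ln x + cQ t * (ln x ^ 2 / 2) + cR t * x + cS t * (x * ln x - x) + cE t.
Proof.
  intros Hx.
  assert (H : forall s, 0 < s -> is_derive (fun s => F t s
      - (cP t * ln s + cQ t * (ln s ^ 2 / 2) + cR t * s + cS t * (s * ln s - s))) s 0).
  { intros s Hs. auto_derive.
    - repeat split; try lra. exact (proj2 (phi_smooth (VU :: nil)%list t s 0 Hs) VX).
    - change (Derive (fun s => F t s) s) with (Fx t s).
      rewrite Fx_eq by exact Hs. field. lra. }
  pose proof (is_derive0_const_pos _ H x Hx) as C. simpl in C.
  unfold cE. rewrite ln_1 in C. lra.
Qed.

Definition Ft t x := Derive (fun s => F s x) t.
Definition Fxx t x := Derive (fun s => Fx t s) x.

Lemma phi_t_affine t x u : 0 < x -> pd VT phi t x u = Ft t x * u + pd VT phi t x 0.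
Proof.
  intros Hx. rewrite (pd_ext phi _ phi_affine VT t x u Hx). apply Derive_affine.
  - exact (proj2 (phi_smooth (VU :: nil)%list t x 0 Hx) VT).
  - exact (proj2 (phi_smooth nil t x 0 Hx) VT).
Qed.

Lemma phi_x_affine t x u : 0 < x -> pd VX phi t x u = Fx t x * u + pd VX phi t x 0.
Proof.
  intros Hx. rewrite (pd_ext phi _ phi_affine VX t x u Hx). apply Derive_affine.
  - exact (proj2 (phi_smooth (VU :: nil)%list t x 0 Hx) VX).
  - exact (proj2 (phi_smooth nil t x 0 Hx) VX).
Qed.

Lemma phi_xx_affine t x u : 0 < x ->
  pd VX (pd VX phi) t x u = Fxx t x * u + pd VX (pd VX phi) t x 0.
Proof.
  intros Hx. rewrite (pd_ext (pd VX phi) _ phi_x_affine VX t x u Hx). apply Derive_affine.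
  - exact (proj2 (phi_smooth (VX :: VU :: nil)%list t x 0 Hx) VX).
  - exact (proj2 (phi_smooth (VX :: nil)%list t x 0 Hx) VX).
Qed.

Lemma u_coefficient_eq t x : 0 < x ->
  Ft t x = 2 * lambda * x * xi t x 0 + lambda * x ^ 2 * T1 t
    + k * x * (alpha - x) * Fx t x + / 2 * sigma ^ 2 * x ^ 2 * Fxx t x.
Proof.
  intros Hx.
  destruct (determining_equations t x 1 Hx) as [_ [_ [_ E1]]].
  destruct (determining_equations t x 0 Hx) as [_ [_ [_ E0]]].
  rewrite phi_t_affine, phi_x_affine, phi_xx_affine, phi_u_eq, phi_affine, tau_t_eq,
    (xi_eq t x 1), <- (xi_eq t x 0) in E1 by exact Hx.
  fold (F t x) in E0. rewrite tau_t_eq in E0 by exact Hx.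
  lra.
Qed.

Lemma Fxx_eq t x : 0 < x -> Fxx t x = (cQ t - cP t - cQ t * ln x) / x ^ 2 + cS t / x.
Proof.
  intros Hx. unfold Fxx.
  rewrite (Derive_ext_loc _ (fun s => (cP t + cQ t * ln s) / s + cR t + cS t * ln s)).
  - apply is_derive_unique. auto_derive; [lra | field; lra].
  - apply (filter_imp _ _ (Fx_eq t)). exact (locally_pos x Hx).
Qed.

Lemma ex_derive_cP t : ex_derive cP t.
Proof. unfold cP. auto_derive. repeat split; auto using ex_derive_B1, ex_derive_T1. Qed.
Lemma ex_derive_cQ t : ex_derive cQ t.
Proof. unfold cQ. auto_derive. repeat split; auto using ex_derive_T2. Qed.
Lemma ex_derive_cR t : ex_derive cR t.
Proof. unfold cR. auto_derive. repeat split; auto using ex_derive_B, ex_derive_T1. Qed.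
Lemma ex_derive_cS t : ex_derive cS t.
Proof. unfold cS. auto_derive. repeat split; auto using ex_derive_T1. Qed.
Lemma ex_derive_cE t : ex_derive cE t.
Proof.
  unfold cE. auto_derive. repeat split; auto using ex_derive_cR, ex_derive_cS.
  exact (proj2 (phi_smooth (VU :: nil)%list t 1 0 Rlt_0_1) VT).
Qed.

Lemma Derive_cR t : Derive cR t = (k * B1 t + k * T2 t / 2) / sigma ^ 2.
Proof.
  apply is_derive_unique. unfold cR. auto_derive.
  - repeat split; auto using ex_derive_B, ex_derive_T1.
  - change (fun s => B s) with B. change (fun s => T1 s) with T1.
    unfold B1, T2. field. lra.
Qed.

Lemma Derive_cS t : Derive cS t = k * T2 t / (2 * sigma ^ 2).
Proof.
  apply is_derive_unique. unfold cS. auto_derive.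
  - repeat split; auto using ex_derive_T1.
  - change (fun s => T1 s) with T1. unfold T2. field. lra.
Qed.

Lemma Ft_eq t x : 0 < x -> Ft t x =
  Derive cP t * ln x + Derive cQ t * (ln x ^ 2 / 2) + Derive cR t * x
  + Derive cS t * (x * ln x - x) + Derive cE t.
Proof.
  intros Hx. unfold Ft.
  rewrite (Derive_ext _ (fun s => cP s * ln x + cQ s * (ln x ^ 2 / 2) + cR s * x
                                + cS s * (x * ln x - x) + cE s)).
  - apply is_derive_unique. auto_derive.
    + repeat split;
        auto using ex_derive_cP, ex_derive_cQ, ex_derive_cR, ex_derive_cS, ex_derive_cE.
    + change (fun s => cP s) with cP. change (fun s => cQ s) with cQ.
      change (fun s => cR s) with cR. change (fun s => cS s) with cS.
      change (fun s => cE s) with cE. field.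
  - intros s. apply F_eq. exact Hx.
Qed.

Lemma u_coefficient_in_ln_monomials t x : 0 < x ->
  (k * alpha * cP t + sigma ^ 2 * (cQ t - cP t) / 2 - Derive cE t)
  + (k * alpha * cQ t - sigma ^ 2 * cQ t / 2 - Derive cP t) * ln x
  + (- Derive cQ t / 2) * ln x ^ 2
  + (k * alpha * cR t - k * cP t + sigma ^ 2 * cS t / 2 - Derive cR t + Derive cS t) * x
  + (k * alpha * cS t - k * cQ t - Derive cS t) * (x * ln x)
  + (lambda * T1 t + 2 * lambda * B t - k * cR t) * x ^ 2
  + (lambda * T1 t - k * cS t) * (x ^ 2 * ln x) = 0.
Proof.
  intros Hx. pose proof (u_coefficient_eq t x Hx) as E.
  rewrite Ft_eq, Fxx_eq, Fx_eq, (xi_eq t x 0) in E by exact Hx.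
  rewrite <- (Rminus_diag_eq _ _ (eq_sym E)). field. lra.
Qed.

Lemma T1_B_constraints t :
  alpha * T1 t = 0 /\ alpha * (T1 t + B t) = 0 /\
  (lambda - k ^ 2 / (2 * sigma ^ 2)) * T1 t = 0 /\
  (lambda - k ^ 2 / (2 * sigma ^ 2)) * (T1 t + 2 * B t) = 0.
Proof.
  destruct (ln_monomials_indep _ _ _ _ _ _ _ (u_coefficient_in_ln_monomials t))
    as [Cx [Cxln [Cx2 Cx2ln]]].
  rewrite Derive_cR, Derive_cS in Cx. rewrite Derive_cS in Cxln.
  assert (Hk : k ^ 2 / sigma ^ 2 <> 0).
  { apply Rgt_not_eq, Rdiv_lt_0_compat; apply pow_lt; lra. }
  split; [| split; [| split]].
  - apply (Rmult_eq0_reg_l (k ^ 2 / sigma ^ 2 / 2)); [lra |].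
    rewrite <- Cxln. unfold cS, cQ. field. lra.
  - apply (Rmult_eq0_reg_l (k ^ 2 / sigma ^ 2)); [exact Hk |].
    rewrite <- Cx. unfold cP, cR, cS. field. lra.
  - rewrite <- Cx2ln. unfold cS. field. lra.
  - rewrite <- Cx2. unfold cR. field. lra.
Qed.

Hypothesis nondegenerate : alpha <> 0 \/ lambda <> k ^ 2 / (2 * sigma ^ 2).

Lemma T1_B_eq0 t : T1 t = 0 /\ B t = 0.
Proof.
  destruct (T1_B_constraints t) as [H1 [H2 [H3 H4]]].
  destruct nondegenerate as [Ha | Hl].
  - apply (Rmult_eq0_reg_l _ _ Ha) in H1, H2. lra.
  - apply Rminus_eq_contra in Hl.
    apply (Rmult_eq0_reg_l _ _ Hl) in H3, H4. lra.
Qed.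

Lemma cP_cQ_cR_cS_eq0 t : cP t = 0 /\ cQ t = 0 /\ cR t = 0 /\ cS t = 0.
Proof.
  assert (T2z : T2 t = 0).
  { unfold T2. rewrite (Derive_ext T1 (fun _ => 0)); [apply Derive_const |].
    intros s. apply T1_B_eq0. }
  assert (B1z : B1 t = 0).
  { unfold B1. rewrite (Derive_ext B (fun _ => 0)); [apply Derive_const |].
    intros s. apply T1_B_eq0. }
  destruct (T1_B_eq0 t) as [T1z Bz].
  unfold cP, cQ, cR, cS. rewrite T1z, T2z, Bz, B1z.
  repeat split; field; lra.
Qed.

Lemma T_const t : T t = T 0.
Proof.
  apply is_derive0_const. intros s. rewrite <- (proj1 (T1_B_eq0 s)).
  exact (Derive_correct _ _ (ex_derive_T s)).
Qed.

Lemma xi_eq0 t x u : 0 < x -> xi t x u = 0.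
Proof.
  intros Hx. rewrite xi_eq by exact Hx.
  destruct (T1_B_eq0 t) as [-> ->]. field.
Qed.

Lemma Fx_eq0 t x : 0 < x -> Fx t x = 0.
Proof.
  intros Hx. rewrite Fx_eq by exact Hx.
  destruct (cP_cQ_cR_cS_eq0 t) as [-> [-> [-> ->]]]. field. lra.
Qed.

Lemma Ft_eq0 t x : 0 < x -> Ft t x = 0.
Proof.
  intros Hx. rewrite u_coefficient_eq, Fx_eq0, Fxx_eq, xi_eq0 by exact Hx.
  destruct (cP_cQ_cR_cS_eq0 t) as [-> [-> [_ ->]]]. rewrite (proj1 (T1_B_eq0 t)).
  field. lra.
Qed.

Lemma F_const t x : 0 < x -> F t x = F 0 1.
Proof.
  intros Hx. transitivity (F 0 x).
  - apply (is_derive0_const (fun s => F s x)). intros s.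
    rewrite <- (Ft_eq0 s x Hx).
    exact (smooth_is_derive_t phi phi_smooth (VU :: nil) s x 0 Hx).
  - apply (is_derive0_const_pos (F 0)); [| exact Hx]. intros s Hs.
    pose proof (smooth_is_derive_x phi phi_smooth (VU :: nil) 0 s 0 Hs) as D.
    change (is_derive (F 0) s (Fx 0 s)) in D. rewrite Fx_eq0 in D by exact Hs. exact D.
Qed.

Lemma symmetry_form :
  exists (c1 c6 : R) (psi : R -> R -> R),
    is_solution sigma k alpha lambda psi /\
    forall t x u, 0 < x -> tau t x u = c1 /\ xi t x u = 0 /\ phi t x u = c6 * u + psi t x.
Proof.
  exists (T 0), (F 0 1), (fun t x => phi t x 0). split; [exact phi0_solution |].
  intros t x u Hx. split; [| split].
  - rewrite tau_eq by exact Hx. apply T_const.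
  - exact (xi_eq0 t x u Hx).
  - rewrite phi_affine, F_const by exact Hx. reflexivity.
Qed.

End Forward.

Lemma prol_Delta_of_form (sigma k alpha lambda c1 c6 : R) (psi : R -> R -> R)
    (tau xi phi : R -> R -> R -> R) (t x u ut ux uxx uxt utt : R) :
  (forall t x u, 0 < x -> tau t x u = c1 /\ xi t x u = 0 /\ phi t x u = c6 * u + psi t x) ->
  0 < x ->
  prol_Delta sigma k alpha lambda tau xi phi t x u ut ux uxx uxt utt =
  c6 * Defs.Delta sigma k alpha lambda x u ut ux uxx
  - (Derive (fun s => psi s x) t
     - (/ 2 * sigma ^ 2 * x ^ 2 * Derive (fun y => Derive (fun s => psi t s) y) x
        + k * x * (alpha - x) * Derive (fun s => psi t s) x + lambda * x ^ 2 * psi t x)).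
Proof.
  intros H Hx.
  assert (Ht : forall t x u, 0 < x -> tau t x u = c1) by (intros; apply H; auto).
  assert (Hxi : forall t x u, 0 < x -> xi t x u = 0) by (intros; apply H; auto).
  assert (Hphi : forall t x u, 0 < x -> phi t x u = c6 * u + psi t x) by (intros; apply H; auto).
  assert (tau1 : forall i, pd i tau t x u = 0) by (intros i; exact (pd_const _ c1 Ht i t x u Hx)).
  assert (tau2 : forall i j, pd i (pd j tau) t x u = 0)
    by (intros i j; exact (pd_const _ 0 (pd_const _ c1 Ht j) i t x u Hx)).
  assert (xi1 : forall i, pd i xi t x u = 0) by (intros i; exact (pd_const _ 0 Hxi i t x u Hx)).
  assert (xi2 : forall i j, pd i (pd j xi) t x u = 0)
    by (intros i j; exact (pd_const _ 0 (pd_const _ 0 Hxi j) i t x u Hx)).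
  assert (phi_u : forall t x u, 0 < x -> pd VU phi t x u = c6).
  { intros t' x' u' Hx'. rewrite (pd_ext _ _ Hphi VU t' x' u' Hx').
    apply is_derive_unique. auto_derive; auto. ring. }
  assert (phi_u2 : forall i, pd i (pd VU phi) t x u = 0)
    by (intros i; exact (pd_const _ c6 phi_u i t x u Hx)).
  assert (phi_x : forall t x u, 0 < x -> pd VX phi t x u = Derive (fun s => psi t s) x).
  { intros t' x' u' Hx'. rewrite (pd_ext _ _ Hphi VX t' x' u' Hx'). apply Derive_plus_const. }
  assert (phi_t : pd VT phi t x u = Derive (fun s => psi s x) t).
  { rewrite (pd_ext _ _ Hphi VT t x u Hx). apply Derive_plus_const. }
  assert (phi_xx : pd VX (pd VX phi) t x u = Derive (fun y => Derive (fun s => psi t s) y) x)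
    by exact (pd_ext _ _ phi_x VX t x u Hx).
  unfold prol_Delta, Defs.Delta. cbv zeta.
  rewrite !tau1, !tau2, !xi1, !xi2, (phi_u t x u Hx), !phi_u2, phi_t, (phi_x t x u Hx),
    phi_xx, (Hphi t x u Hx), (Hxi t x u Hx).
  ring.
Qed.

Lemma symmetry_of_form (sigma k alpha lambda : R) (tau xi phi : R -> R -> R -> R) :
  (exists (c1 c6 : R) (psi : R -> R -> R),
     is_solution sigma k alpha lambda psi /\
     forall t x u, 0 < x -> tau t x u = c1 /\ xi t x u = 0 /\ phi t x u = c6 * u + psi t x) ->
  is_symmetry sigma k alpha lambda tau xi phi.
Proof.
  intros [c1 [c6 [psi [Hsol H]]]] t x u ut ux uxx uxt utt Hx HD.
  rewrite (prol_Delta_of_form sigma k alpha lambda c1 c6 psi tau xi phi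
             t x u ut ux uxx uxt utt H Hx), HD, (Hsol t x Hx).
  ring.
Qed.

Theorem proposition2p2 (sigma k alpha lambda : R) :
  0 < sigma -> 0 < k -> 0 <= alpha ->
  (alpha <> 0 \/ lambda <> k ^ 2 / (2 * sigma ^ 2)) ->
  forall tau xi phi : R -> R -> R -> R,
    smooth tau -> smooth xi -> smooth phi ->
    (is_symmetry sigma k alpha lambda tau xi phi <->
     exists (c1 c6 : R) (psi : R -> R -> R),
       is_solution sigma k alpha lambda psi /\
       forall t x u, 0 < x ->
         tau t x u = c1 /\ xi t x u = 0 /\ phi t x u = c6 * u + psi t x).
Proof.
  intros sigma_pos k_pos _ nondegenerate tau xi phi tau_smooth xi_smooth phi_smooth.
  split.
  - intros sym. exact (symmetry_form sigma k alpha lambda sigma_pos k_pos tau xi phi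
                         tau_smooth xi_smooth phi_smooth sym nondegenerate).
  - apply symmetry_of_form.
Qed.
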